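(* Let $V\sim\mathrm{Exp}(\lambda)$ with rate $\lambda>0$. For $p_0\ge 0$, $r\in[0,1]$, define $$R(p_0,r)=\mathbb{E}\big[(p_0+rV)\,\mathbb{1}_{\{(1-r)V\ge p_0\}}\big]+p_0\,\Pr\big[(1-r)V<p_0\le V\big].$$ Let $u_c^*=\sup_{p_0\ge0,\,r\in[0,1]}R(p_0,r)$ and $u_{c,r=0}^*=\sup_{p_0\ge 0}p_0\Pr[V>p_0]$. Then $u_c^*=\mathbb{E}[V]=1/\lambda$, $u_{c,r=0}^*=\frac{1}{e\lambda}$, hence $\Delta:=u_c^*-u_{c,r=0}^*=\frac{1}{\lambda}\big(1-\frac1e\big)$, and the relative increase $\mathcal{I}:=\Delta/u_{c,r=0}^*$ equals $e-1\approx 1.72$ for all $\lambda\in(1,\infty)$.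
   Context: $R(p_0,r)$ is the creator's expected revenue when a speculator who observes the realized valuation $v$ buys at price $p_0$ iff $(1-r)v\ge p_0$ and resells at $v$ paying royalty $rv$, and otherwise the creator sells directly to the end-buyer at $p_0$ iff $v\ge p_0$. *)

From HB Require Import structures.
From mathcomp Require Import all_boot all_order all_algebra.
From mathcomp Require Import all_classical all_reals all_analysis.
Set Implicit Arguments. Unset Strict Implicit. Unset Printing Implicit Defensive.
Import Order.TTheory GRing.Theory Num.Theory.
Local Open Scope classical_set_scope.
Local Open Scope ring_scope.
Local Open Scope ereal_scope.

(* V ~ Exp(lam): law given by the library's density [exponential_pdf lam]
   (lam * exp(-lam v) on [0,+oo[, 0 elsewhere) and probability
   [exponential_prob lam A = \int_A exponential_pdf lam]. *)

Definition expV {R : realType} (lam : R) : \bar R :=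
  \int[lebesgue_measure]_(v in [set: R]) (v * exponential_pdf lam v)%:E.

Definition creator_rev {R : realType} (lam p0 r : R) : \bar R :=
  \int[lebesgue_measure]_(v in [set: R])
     ((p0 + r * v) * (\1_[set w : R | p0 <= (1 - r) * w] v)
        * exponential_pdf lam v)%:E
  + p0%:E * exponential_prob lam [set v : R | ((1 - r) * v < p0) && (p0 <= v)]%R.

Definition u_c {R : realType} (lam : R) : \bar R :=
  ereal_sup [set z | exists p0 r : R,
     [/\ (0 <= p0)%R, (0 <= r <= 1)%R & z = creator_rev lam p0 r]].

Definition u_c_r0 {R : realType} (lam : R) : \bar R :=
  ereal_sup ((fun p0 : R => p0%:E * exponential_prob lam [set v : R | p0 < v]%R)
             @` [set p : R | 0 <= p]%R).

(* Pointwise, the creator never earns more than the realized value v: if the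
   speculator buys, it pays p0 <= (1 - r) v and resells paying the royalty r v,
   so the creator gets at most v; otherwise the creator sells at p0 <= v or not
   at all.  Hence R(p0, r) <= E[V] = 1/lam, with equality at p0 = 0, r = 1, where
   the speculator always buys and returns the whole resale price as royalty.
   Without royalty the revenue is p e^(-lam p), maximal at p = 1/lam because
   x e^(-x) <= e^(-1), i.e. x <= e^(x - 1). *)

From HB Require Import structures.
From mathcomp Require Import all_boot all_order all_algebra.
From mathcomp Require Import all_classical all_reals all_analysis.
From mathcomp Require Import ring lra measurable_realfun.
Import Order.TTheory GRing.Theory Num.Theory.
Import numFieldTopology.Exports.
Local Open Scope classical_set_scope.
Local Open Scope ring_scope.

Section expR_decay.
Context {R : realType}.

Lemma mulr_expRN_le (x : R) : x * expR (- x) <= expR (-1).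
Proof.
rewrite expRN ler_pdivrMr ?expR_gt0 // -expRD.
by have := expR_ge1Dx (x - 1); rewrite addrC subrK addrC.
Qed.

Lemma continuous_expRNM (a : R) : continuous (fun x : R => expR (- a * x)).
Proof.
move=> x; apply: continuous_comp; last exact: continuous_expR.
by apply: continuousM => //; exact: cst_continuous.
Qed.

Lemma is_derive_expRNM (a x : R) :
  is_derive x 1 (fun y => expR (- a * y)) (- a * expR (- a * x)).
Proof.
have lin : is_derive x (1 : R) (fun y => - a * y) (- a).
  by apply: is_derive_eq; rewrite /GRing.scale /= mulr1.
have := is_derive1_comp (is_derive_expR _) lin.
by move/is_derive_eq; apply; rewrite mulrC.
Qed.

Lemma cvgr_expRNM (a : R) : 0 < a -> expR (- a * x) @[x --> +oo] --> 0.
Proof.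
move=> a_gt0; under eq_fun do rewrite mulNr.
apply: (@cvg_comp _ _ _ (fun x => a * x) (fun x => expR (- x))).
  exact: gt0_cvgMry.
exact: cvgr_expR.
Qed.

Lemma cvgr_mulr_expRNM (a : R) : 0 < a -> x * expR (- a * x) @[x --> +oo] --> 0.
Proof.
move=> a_gt0; set c := 2 / a * expR (-1).
have c_to0 : c * expR (- (a / 2) * x) @[x --> +oo] --> 0.
  rewrite -(mulr0 c); apply: cvgM; first exact: cvg_cst.
  by apply: cvgr_expRNM; rewrite divr_gt0.
apply: (@squeeze_cvgr _ _ _ _ (cst 0) (fun x => c * expR (- (a / 2) * x)));
  [near=> x | exact: cvg_cst | exact: c_to0].
have x_ge0 : 0 <= x by near: x; apply: nbhs_pinfty_ge.
rewrite mulr_ge0 ?expR_ge0 //=.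
have -> : x * expR (- a * x) =
    2 / a * (a / 2 * x * expR (- (a / 2) * x)) * expR (- (a / 2) * x).
  rewrite {1}(splitr a) opprD mulrDl expRD.
  by field; rewrite lt0r_neq0.
apply: ler_wpM2r; first exact: expR_ge0.
by rewrite ler_pM2l ?divr_gt0 // mulNr mulr_expRN_le.
Unshelve. all: end_near. Qed.

End expR_decay.

Lemma ereal_sup_max (R : realType) (S : set (\bar R)) (m : \bar R) :
  S m -> ubound S m -> ereal_sup S = m.
Proof.
move=> Sm ubm; apply/eqP; rewrite eq_le ge_ereal_sup //=.
exact: ereal_sup_ubound.
Qed.

Lemma measurable_boolset d (T : measurableType d) (P : T -> bool) :
  measurable_fun setT P -> measurable [set x | P x].
Proof.
move=> /(_ measurableT [set true] I); rewrite setTI.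
by congr measurable; apply/seteqP; split => x /=.
Qed.

Lemma indic_boolset (T : Type) (R : realType) (P : T -> bool) (x : T) :
  \1_[set w | P w] x = (P x)%:R :> R.
Proof.
rewrite indicE; have [Px|Px] := boolP (P x); first by rewrite mem_set.
by rewrite memNset //=; apply/negP.
Qed.

Section exponential_distribution.
Context {R : realType} {lam : R} (lam_gt0 : 0 < lam).

Lemma exponential_prob_gt (p : R) : 0 <= p ->
  exponential_prob lam [set v | p < v] = (expR (- lam * p))%:E.
Proof.
move=> p_ge0.
have -> : [set v | p < v] = `]p, +oo[%classic.
  by apply/seteqP; split => x /=; rewrite in_itv /= andbT.
rewrite /exponential_prob integral_itv_obnd_cbnd; last first.
  by apply/measurable_EFinP/measurable_funTS; exact: measurable_exponential_pdf.
rewrite (@ge0_continuous_FTC2y _ _ (fun x => - expR (- lam * x)) p 0).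
- by rewrite EFinN oppeK add0e.
- by move=> x _; rewrite exponential_pdf_ge0 ?ltW.
- apply: (@continuous_subspaceW R^o _ _ `[0, +oo[%classic).
    by apply: subset_itvr; rewrite bnd_simp.
  exact: within_continuous_exponential_pdf.
- by rewrite -oppr0; apply: cvgN; exact: cvgr_expRNM.
- by move=> x _.
- by apply: cvg_at_right_filter; apply: cvgN; exact: continuous_expRNM.
- move=> x; rewrite in_itv /= andbT => p_lt_x.
  by apply: derive1_exponential_pdf; rewrite in_itv /= andbT (le_lt_trans p_ge0).
Qed.

Lemma mulr_exponential_pdf_ge0 (y v : R) :
  (0 <= v -> 0 <= y) -> 0 <= y * exponential_pdf lam v.
Proof.
move=> y_ge0; have [v_lt0|v_ge0] := ltP v 0.
  by rewrite lt0_exponential_pdf ?mulr0.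
by rewrite mulr_ge0 ?y_ge0 // exponential_pdf_ge0 // ltW.
Qed.

Let mean_integrand (x : R) := x * (lam * expR (- lam * x)).
Let mean_primitive (x : R) := - ((x + lam^-1) * expR (- lam * x)).

Let is_derive_mean_primitive (x : R) :
  is_derive x (1 : R) mean_primitive (mean_integrand x).
Proof.
have -> : mean_primitive = - ((fun y => y + lam^-1) * (fun y => expR (- lam * y))).
  by apply/funext.
have dE := is_derive_expRNM lam x.
have dD : is_derive x (1 : R) (fun y => y + lam^-1) 1.
  by apply: is_derive_eq; rewrite addr0.
apply: is_derive_eq.
by rewrite /mean_integrand /GRing.scale /=; field; rewrite lt0r_neq0.
Qed.

Let cvgr_mean_primitive : mean_primitive x @[x --> +oo] --> 0.
Proof.
rewrite -oppr0; apply: cvgN; rewrite -[0]addr0.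
under eq_fun do rewrite mulrDl.
apply: cvgD; first exact: cvgr_mulr_expRNM.
by rewrite -(mulr0 lam^-1); apply: cvgM; [exact: cvg_cst | exact: cvgr_expRNM].
Qed.

Lemma expVE : expV lam = (lam^-1)%:E.
Proof.
have dF := is_derive_mean_primitive.
have mf : measurable_fun setT (fun v : R => v * exponential_pdf lam v).
  by apply: measurable_funM => //; exact: measurable_exponential_pdf.
rewrite /expV -(setUv `[0, +oo[%classic) ge0_integral_setU//=; last 4 first.
- exact: measurableC.
- by apply/measurable_EFinP; rewrite setUv.
- by move=> x _; rewrite lee_fin; apply: mulr_exponential_pdf_ge0 => //.
- exact/disj_setPCl.
rewrite [X in (_ + X)%E]integral0_eq ?adde0; last first.
  move=> x; rewrite /= in_itv /= andbT => /negP; rewrite -ltNge => x_lt0.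
  by rewrite lt0_exponential_pdf ?mulr0.
transitivity (\int[lebesgue_measure]_(x in `[0%R, +oo[) (mean_integrand x)%:E)%E.
  apply: eq_integral => x; rewrite inE /= in_itv /= andbT => x_ge0.
  by rewrite exponential_pdfE.
rewrite (@ge0_continuous_FTC2y _ mean_integrand mean_primitive 0 0).
- by rewrite /mean_primitive mulr0 expR0 mulr1 !add0r EFinN oppeK.
- by move=> x x_ge0; rewrite /mean_integrand !mulr_ge0 ?expR_ge0 // ltW.
- apply: continuous_subspaceT => x; apply: cvgM; first exact: cvg_id.
  by apply: cvgM; [exact: cvg_cst | exact: continuous_expRNM].
- exact: cvgr_mean_primitive.
- by move=> x _; exact: ex_derive.
- apply: cvg_at_right_filter.
  by have /derivable1_diffP/differentiable_continuous : derivable mean_primitive 0 1.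
- by move=> x _; rewrite derive1E derive_val.
Qed.
End exponential_distribution.

Section creator_revenue.
Context {R : realType}.
Variables (lam p0 r : R).
Hypotheses (lam_gt0 : 0 < lam) (p0_ge0 : 0 <= p0) (r_ge0 : 0 <= r) (r_le1 : r <= 1).

Let bought := [set w : R | p0 <= (1 - r) * w].
Let sold_directly := [set w : R | ((1 - r) * w < p0) && (p0 <= w)].

Definition creator_payoff (v : R) : R :=
  (p0 + r * v) * \1_bought v + p0 * \1_sold_directly v.

Let measurable_bought : measurable bought.
Proof. by apply: measurable_boolset; exact: measurable_fun_ler. Qed.

Let measurable_sold_directly : measurable sold_directly.
Proof.
apply: measurable_boolset; apply: measurable_and.
- exact: measurable_fun_ltr.
- exact: measurable_fun_ler.
Qed.

Let measurable_royalty_part :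
  measurable_fun setT (fun v => (p0 + r * v) * \1_bought v).
Proof. by apply: measurable_funM; [exact: measurable_funD | exact: measurable_indic]. Qed.

Lemma measurable_creator_payoff : measurable_fun setT creator_payoff.
Proof.
apply: measurable_funD; first exact: measurable_royalty_part.
by apply: measurable_funM => //; exact: measurable_indic.
Qed.

Lemma creator_payoff_ge0 (v : R) : 0 <= v -> 0 <= creator_payoff v.
Proof. by move=> v_ge0; rewrite addr_ge0 // mulr_ge0 ?addr_ge0 ?mulr_ge0. Qed.

Lemma creator_payoff_le (v : R) : 0 <= v -> creator_payoff v <= v.
Proof.
move=> v_ge0; rewrite /creator_payoff !indic_boolset.
have [buys|] := leP p0 ((1 - r) * v).
  by rewrite mulr1 mulr0 addr0; rewrite mulrBl mul1r in buys; lra.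
by rewrite mulr0 add0r; have [|_] := leP p0 v; rewrite ?mulr1 ?mulr0.
Qed.

Lemma creator_revE : creator_rev lam p0 r =
  (\int[lebesgue_measure]_(v in [set: R])
     (creator_payoff v * exponential_pdf lam v)%:E)%E.
Proof.
have mpdf := measurable_exponential_pdf lam.
pose royalty v := (p0 + r * v) * \1_bought v * exponential_pdf lam v.
pose direct v := \1_sold_directly v * exponential_pdf lam v.
(* Stated in the exact shape of the side conditions of [ge0_integralZl_EFin]
   and [ge0_integralD], so that [//] discharges them. *)
have royalty_ge0 v : [set: R] v -> (0 <= (royalty v)%:E)%E.
  move=> _; rewrite lee_fin /royalty; apply: mulr_exponential_pdf_ge0 => // v_ge0.
  by rewrite mulr_ge0 ?addr_ge0 ?mulr_ge0.
have direct_ge0 v : [set: R] v -> (0 <= (direct v)%:E)%E.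
  by move=> _; rewrite lee_fin /direct; apply: mulr_exponential_pdf_ge0 => //.
have mroyalty : measurable_fun setT (EFin \o royalty).
  by apply/measurable_EFinP/measurable_funM; first exact: measurable_royalty_part.
have mdirect : measurable_fun setT (EFin \o direct).
  by apply/measurable_EFinP/measurable_funM; first exact: measurable_indic.
have probE : exponential_prob lam sold_directly =
    (\int[lebesgue_measure]_(v in [set: R]) (direct v)%:E)%E.
  rewrite /exponential_prob integral_mkcond; apply: eq_integral => v _.
  by rewrite patchE /direct indicE; case: (v \in sold_directly); rewrite ?mul1r ?mul0r.
rewrite /creator_rev -/bought -/sold_directly probE -ge0_integralZl_EFin //.
rewrite -ge0_integralD //; last first.
- apply/measurable_EFinP; apply: measurable_funM => //.
  exact/measurable_EFinP.
- by move=> v _; rewrite -EFinM lee_fin mulr_ge0 // -lee_fin direct_ge0.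
apply: eq_integral => v _; rewrite -EFinM -EFinD; congr EFin.
by rewrite /royalty /direct /creator_payoff; ring.
Qed.

Lemma creator_rev_le_mean : (creator_rev lam p0 r <= expV lam)%E.
Proof.
have mpdf := measurable_exponential_pdf lam.
rewrite creator_revE; apply: ge0_le_integral => //.
- move=> v _; rewrite lee_fin; apply: mulr_exponential_pdf_ge0 => //.
  exact: creator_payoff_ge0.
- apply/measurable_EFinP; apply: measurable_funM => //.
  exact: measurable_creator_payoff.
- by apply/measurable_EFinP; apply: measurable_funM.
move=> v _; rewrite lee_fin.
have [v_lt0|v_ge0] := ltP v 0; first by rewrite lt0_exponential_pdf ?mulr0.
apply: ler_wpM2r; last exact: creator_payoff_le.
by rewrite exponential_pdf_ge0 // ltW.
Qed.

End creator_revenue.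

Section optimal_revenues.
Context {R : realType} {lam : R} (lam_gt0 : 0 < lam).

Lemma creator_rev_full_royalty : creator_rev lam 0 1 = expV lam.
Proof.
rewrite /creator_rev mul0e adde0; apply: eq_integral => v _.
by rewrite add0r mul1r subrr indic_boolset mul0r lexx /= mulr1.
Qed.

Lemma u_cE : u_c lam = expV lam.
Proof.
apply: ereal_sup_max; first by exists 0, 1; rewrite !lexx ler01 creator_rev_full_royalty.
by move=> _ [p0 [r [p0_ge0 /andP[r_ge0 r_le1] ->]]]; exact: creator_rev_le_mean.
Qed.

Lemma posted_price_rev_le (p : R) : p * expR (- lam * p) <= (expR 1 * lam)^-1.
Proof.
have -> : p * expR (- lam * p) = lam^-1 * (lam * p * expR (- (lam * p))).
  by rewrite mulNr mulrA mulKf ?lt0r_neq0.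
rewrite invfM mulrC -expRN ler_pM2r ?invr_gt0 //.
exact: mulr_expRN_le.
Qed.

Lemma u_c_r0E : u_c_r0 lam = ((expR 1 * lam)^-1)%:E.
Proof.
apply: ereal_sup_max.
  exists lam^-1; first by rewrite /= invr_ge0 ltW.
  rewrite exponential_prob_gt ?invr_ge0 ?ltW // -EFinM; congr EFin.
  by rewrite mulNr mulfV ?lt0r_neq0 // expRN invfM mulrC.
move=> _ [p p_ge0 <-]; rewrite exponential_prob_gt // -EFinM lee_fin.
exact: posted_price_rev_le.
Qed.

End optimal_revenues.

Theorem lemma4 (R : realType) (lam : R) (hlam : 0 < lam) :
  [/\ u_c lam = expV lam,
      expV lam = (lam^-1)%:E,
      u_c_r0 lam = ((expR 1 * lam)^-1)%:E,
      fine (u_c lam) - fine (u_c_r0 lam) = lam^-1 * (1 - (expR 1)^-1)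
    & (fine (u_c lam) - fine (u_c_r0 lam)) / fine (u_c_r0 lam) = expR 1 - 1].
Proof.
have uc : u_c lam = (lam^-1)%:E by rewrite (u_cE hlam) (expVE hlam).
have ur := u_c_r0E hlam.
split.
- exact: u_cE.
- exact: expVE.
- exact: ur.
- by rewrite uc ur /=; field; rewrite !lt0r_neq0.
- by rewrite uc ur /=; field; rewrite !lt0r_neq0.
Qed.
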